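(* Let $F:\mathcal{P}(V,A)\to S_2(A)$ be an irreducible, weakly viable consular election rule satisfying SPP and SPO. Then every vertex of the range graph $\mathcal{G}(F)$ belongs to a $3$-cycle.
   Context: $V$ is a finite nonempty set of voters, $A$ a finite set of alternatives; a profile $P$ assigns to each voter $i$ a linear order $P_i$ on $A$; $P_i'P_{-i}$ replaces voter $i$'s order by $P_i'$; $P|_B$ is the profile of restrictions to $B\subseteq A$. $S_2(A)$ is the set of 2-element subsets of $A$; a consular election rule is a map $F:\mathcal{P}(V,A)\to S_2(A)$. SPO: for all $P$, $i$, $P_i'$, $\mathrm{best}(P_i,F(P))\succeq_i\mathrm{best}(P_i,F(P_i'P_{-i}))$; SPP: same with $\mathrm{worst}$, where $\mathrm{best}(P_i,W)$, $\mathrm{worst}(P_i,W)$ are the $P_i$-best and $P_i$-worst elements of $W$. Weakly viable: every $a\in A$ lies in $F(P)$ for some $P$. $F$ is reducible if there is a partition $A=B\uplus C$ and social choice functions $G:\mathcal{P}(V,B)\to B$, $H:\mathcal{P}(V,C)\to C$ with $F(P)=\{G(P|_B),H(P|_C)\}$ for all $P$; irreducible means not reducible. The range graph $\mathcal{G}(F)$ has vertex set $A$ and edge set equal to the range of $F$. *)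

From mathcomp Require Import all_boot.
Set Implicit Arguments. Unset Strict Implicit. Unset Printing Implicit Defensive.

(* A (strict) linear order on T: r x y means "x is strictly preferred to y". *)
Record linord (T : eqType) := Linord {
  lrel :> rel T;
  lrel_irr : irreflexive lrel;
  lrel_trans : transitive lrel;
  lrel_tot : forall x y, x != y -> lrel x y || lrel y x }.

Definition profile (V : finType) (T : eqType) := V -> linord T.

Definition upd (V : finType) (T : eqType) (P : profile V T) (i : V) (Q : linord T)
  : profile V T := fun j => if j == i then Q else P j.

Definition subalt (A : finType) (B : {set A}) := {x : A | x \in B}.

Section Restrict.
Variables (A : finType) (B : {set A}) (r : linord A).
Definition rrel : rel (subalt B) := fun x y => r (val x) (val y).
Lemma rrel_irr : irreflexive rrel.
Proof. by move=> x; rewrite /rrel lrel_irr. Qed.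
Lemma rrel_trans : transitive rrel.
Proof. by move=> y x z; rewrite /rrel; apply: lrel_trans. Qed.
Lemma rrel_tot x y : x != y -> rrel x y || rrel y x.
Proof. by move=> nxy; apply: lrel_tot; apply: contra nxy => /eqP/val_inj ->. Qed.
Definition restrict_ord : linord (subalt B) := Linord rrel_irr rrel_trans rrel_tot.
End Restrict.

Definition restr (V A : finType) (B : {set A}) (P : profile V A)
  : profile V (subalt B) := fun i => restrict_ord B (P i).

Definition S2 (A : finType) := {W : {set A} | #|W| == 2}.

Definition is_best (A : finType) (r : linord A) (W : {set A}) (x : A) :=
  x \in W /\ forall y, y \in W -> y != x -> r x y.
Definition is_worst (A : finType) (r : linord A) (W : {set A}) (x : A) :=
  x \in W /\ forall y, y \in W -> y != x -> r y x.

Definition wpref (A : finType) (r : linord A) (x y : A) := x = y \/ r x y.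

Definition SPO (V A : finType) (F : profile V A -> S2 A) :=
  forall (P : profile V A) (i : V) (Q : linord A) (b b' : A),
    is_best (P i) (val (F P)) b -> is_best (P i) (val (F (upd P i Q))) b' ->
    wpref (P i) b b'.

Definition SPP (V A : finType) (F : profile V A -> S2 A) :=
  forall (P : profile V A) (i : V) (Q : linord A) (w w' : A),
    is_worst (P i) (val (F P)) w -> is_worst (P i) (val (F (upd P i Q))) w' ->
    wpref (P i) w w'.

Definition weakly_viable (V A : finType) (F : profile V A -> S2 A) :=
  forall a : A, exists P, a \in val (F P).

Definition reducible (V A : finType) (F : profile V A -> S2 A) :=
  exists (B C : {set A})
         (G : profile V (subalt B) -> subalt B)
         (H : profile V (subalt C) -> subalt C),
    [/\ B :&: C = set0, B :|: C = setT &
        forall P, val (F P) = [set val (G (restr B P)); val (H (restr C P))]].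

Definition irreducible (V A : finType) (F : profile V A -> S2 A) := ~ reducible F.

Definition range_edge (V A : finType) (F : profile V A -> S2 A) (x y : A) :=
  exists P, val (F P) = [set x; y].

Definition on_3cycle (V A : finType) (F : profile V A -> S2 A) (a : A) :=
  exists b c : A, [&& a != b, b != c & a != c] /\
    [/\ range_edge F a b, range_edge F b c & range_edge F a c].

From mathcomp Require Import all_boot boolp.
Set Implicit Arguments. Unset Strict Implicit. Unset Printing Implicit Defensive.

(* Suppose a lies on no 3-cycle of G(F) and let N be its neighbourhood. No edge
   of G(F) has both ends in N, since it would close a triangle through a. No
   edge {x, y} avoids N either: if F(P) = {x, y}, switching the voters one at a
   time to the order a > x > y > ... keeps the outcome {x, y} by SPP, whereas
   SPO and weak viability force the unanimous top a into the outcome. Hence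
   every outcome has exactly one element in N. For such a bipartition, SPO and
   SPP show that the N-element of F(P) only depends on P restricted to N, and
   likewise for the complement of N, so F is reducible. *)

Section LinearOrders.
Variable T : eqType.
Implicit Types (r : linord T) (x y z u v : T).

Lemma lrel_lt_trans r x y z : r x y -> r y z -> r x z.
Proof. exact: (@lrel_trans _ r y). Qed.

Lemma lrel_asym r x y : r x y -> r y x = false.
Proof. by move=> rxy; apply/negP => /(lrel_lt_trans rxy); rewrite lrel_irr. Qed.

Definition raise_rel x r : rel T :=
  fun u v => if u == x then v != x else (v != x) && r u v.

Lemma raise_rel_irr x r : irreflexive (raise_rel x r).
Proof.
by move=> u; rewrite /raise_rel lrel_irr andbF; case: ifP => // /eqP ->; rewrite eqxx.
Qed.

Lemma raise_rel_trans x r : transitive (raise_rel x r).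
Proof.
move=> v u w; rewrite /raise_rel.
case: (v =P x) => [_|_]; first by case: ifP.
move=> + /andP[wx rvw]; case: ifP => // _ /andP[_ ruv].
by rewrite wx (lrel_lt_trans ruv rvw).
Qed.

Lemma raise_rel_tot x r u v : u != v -> raise_rel x r u v || raise_rel x r v u.
Proof.
rewrite /raise_rel => uv; case: (u =P x) => [ux|/eqP ux]; first by rewrite -ux eq_sym uv.
case: (v =P x) => //= _; exact: lrel_tot.
Qed.

Definition raise x r : linord T :=
  Linord (@raise_rel_irr x r) (@raise_rel_trans x r) (@raise_rel_tot x r).

Lemma raise_top x r z : z != x -> raise x r x z.
Proof. by rewrite /= /raise_rel eqxx. Qed.

Lemma raise_lt x r u v : raise x r u v -> u = x \/ r u v.
Proof. by rewrite /= /raise_rel; case: eqP => [->|_ /andP[_ ruv]]; [left | right]. Qed.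

End LinearOrders.

Definition rank_rel (A : finType) : rel A := fun u v => enum_rank u < enum_rank v.

Lemma rank_rel_irr (A : finType) : irreflexive (@rank_rel A).
Proof. by move=> u; rewrite /rank_rel ltnn. Qed.

Lemma rank_rel_trans (A : finType) : transitive (@rank_rel A).
Proof. by move=> v u w; apply: ltn_trans. Qed.

Lemma rank_rel_tot (A : finType) (u v : A) : u != v -> rank_rel u v || rank_rel v u.
Proof.
move=> uv; rewrite /rank_rel -neq_ltn.
by apply: contra uv => /eqP/val_inj/enum_rank_inj ->.
Qed.

Definition rank_ord (A : finType) : linord A :=
  Linord (@rank_rel_irr A) (@rank_rel_trans A) (@rank_rel_tot A).

Section BlockOrder.
Variables (A : finType) (B : {set A}) (r : linord A).

Definition block_rel : rel A :=
  fun u v => if (u \in B) == (v \in B) then r u v else u \in B.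

Lemma block_rel_irr : irreflexive block_rel.
Proof. by move=> u; rewrite /block_rel eqxx lrel_irr. Qed.

Lemma block_rel_trans : transitive block_rel.
Proof.
move=> v u w; rewrite /block_rel.
by case: (u \in B); case: (v \in B); case: (w \in B) => //=; apply: lrel_lt_trans.
Qed.

Lemma block_rel_tot u v : u != v -> block_rel u v || block_rel v u.
Proof.
rewrite /block_rel => uv.
by case: (u \in B); case: (v \in B) => //=; apply: lrel_tot.
Qed.

Definition block : linord A := Linord block_rel_irr block_rel_trans block_rel_tot.

Lemma block_outF u v : u \notin B -> v \in B -> block u v = false.
Proof. by move=> /negbTE uB vB; rewrite /= /block_rel uB vB. Qed.

End BlockOrder.

Section WeakPreference.
Variable A : finType.
Implicit Types (r : linord A) (x y z : A).

Lemma wpref_trans r x y z : wpref r x y -> wpref r y z -> wpref r x z.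
Proof.
case=> [->|rxy] // [<-|ryz]; right => //; exact: lrel_lt_trans rxy ryz.
Qed.

Lemma wpref_ltF r x y : wpref r x y -> r y x = false.
Proof. by case=> [->|/lrel_asym //]; rewrite lrel_irr. Qed.

Lemma wpref_top r x z : (forall y, y != x -> r x y) -> wpref r z x -> z = x.
Proof.
move=> xtop [//|rzx]; apply/eqP; apply: contraT => zx.
by rewrite (lrel_asym (xtop z zx)) in rzx.
Qed.

Lemma wpref_raise x r y z : wpref (raise x r) z y -> z = x \/ wpref r z y.
Proof. by case=> [->|/raise_lt [->|rzy]]; [right; left | left | right; right]. Qed.

Lemma wpref_raise_top x r z : wpref (raise x r) z x -> z = x.
Proof. exact/wpref_top/raise_top. Qed.

End WeakPreference.

Section PairOutcomes.
Variable A : finType.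
Implicit Types (W : S2 A) (r : linord A) (x y z : A).

Lemma S2P W : exists x y, x != y /\ val W = [set x; y].
Proof. by case: W => W /= /cards2P. Qed.

Lemma S2_sub2 W x y : {subset val W <= [set x; y]} -> val W = [set x; y].
Proof.
move=> /subsetP WS; apply/eqP.
by rewrite eqEcard WS cards2 (eqP (valP W)) ltnS leq_b1.
Qed.

Lemma S2_eq2 W x y : x \in val W -> y \in val W -> x != y -> val W = [set x; y].
Proof.
move=> xW yW xy; apply/esym/eqP.
by rewrite eqEcard subUset !sub1set xW yW cards2 xy (eqP (valP W)).
Qed.

Lemma S2_other W x : exists2 y, y \in val W & y != x.
Proof.
have [p [q [pq ->]]] := S2P W.
case: (eqVneq p x) => [<-|px]; last by exists p; rewrite ?set21.
by exists q; rewrite ?set22 // eq_sym.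
Qed.

Lemma S2_best r W : exists b, is_best r (val W) b.
Proof.
have [p [q [pq ->]]] := S2P W.
case/orP: (lrel_tot r pq) => rpq; [exists p | exists q];
  by split=> [|z /set2P[]->]; rewrite ?set21 ?set22 ?eqxx.
Qed.

Lemma S2_worst r W : exists w, is_worst r (val W) w.
Proof.
have [p [q [pq ->]]] := S2P W.
case/orP: (lrel_tot r pq) => rpq; [exists q | exists p];
  by split=> [|z /set2P[]->]; rewrite ?set21 ?set22 ?eqxx.
Qed.

End PairOutcomes.

Section Profiles.
Variables (V : finType) (T : eqType).
Implicit Types (P Q : profile V T) (i : V) (R : linord T).

Lemma upd_at P i R : upd P i R i = R.
Proof. by rewrite /upd eqxx. Qed.

Lemma upd_id P i : upd P i (P i) = P.
Proof. by apply: funext => j; rewrite /upd; case: eqP => [->|]. Qed.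

Lemma upd_upd P i R R' : upd (upd P i R) i R' = upd P i R'.
Proof. by apply: funext => j; rewrite /upd; case: eqP. Qed.

Lemma profile_walk (Inv : profile V T -> Prop) P Q :
  Inv P ->
  (forall X i, (forall j, X j = P j \/ X j = Q j) -> Inv X -> Inv (upd X i (Q i))) ->
  Inv Q.
Proof.
move=> InvP step; pose mix (s : seq V) : profile V T := fun j => if j \in s then Q j else P j.
have -> : Q = mix (enum V) by apply: funext => j; rewrite /mix mem_enum.
elim: (enum V) => [|i s IH]; first by have -> : mix [::] = P by apply: funext.
have -> : mix (i :: s) = upd (mix s) i (Q i).
  by apply: funext => j; rewrite /mix /upd in_cons; case: eqP => [->|].
by apply: step IH => j; rewrite /mix; case: (j \in s); [right | left].
Qed.

End Profiles.

Section RangeGraph.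
Variables (V A : finType) (F : profile V A -> S2 A).

Lemma range_edge_neq x y : range_edge F x y -> x != y.
Proof. by case=> P FP; move: (valP (F P)); rewrite FP cards2; case: (x != y). Qed.

Lemma range_edge_mem P x y : x \in val (F P) -> y \in val (F P) -> x != y -> range_edge F x y.
Proof. by move=> xP yP xy; exists P; apply: S2_eq2. Qed.

Definition nbhd a : {set A} := [set z | `[< range_edge F a z >]].

Definition bipartition (B : {set A}) :=
  forall x y, range_edge F x y -> (x \in B) = (y \notin B).

End RangeGraph.

Section Strategyproofness.
Variables (V A : finType) (F : profile V A -> S2 A).
Implicit Types (P : profile V A) (i : V) (R Q : linord A) (a x y z : A).

Lemma SPO_upd (spo : SPO F) P i R Q z :
  z \in val (F (upd P i Q)) -> exists2 w, w \in val (F (upd P i R)) & wpref R w z.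
Proof.
move=> zQ; have [b [bR Rb]] := S2_best R (F (upd P i R)).
have [b' [b'Q Rb']] := S2_best R (F (upd P i Q)).
exists b => //; apply: (wpref_trans (y := b')).
  by have := spo (upd P i R) i Q b b'; rewrite upd_upd upd_at; apply.
by case: (eqVneq z b') => [->|zb']; [left | right; apply: Rb'].
Qed.

Lemma SPP_upd (spp : SPP F) P i R Q :
  exists2 w, w \in val (F (upd P i Q)) & forall z, z \in val (F (upd P i R)) -> wpref R z w.
Proof.
have [w [wR Rw]] := S2_worst R (F (upd P i R)).
have [w' [w'Q Rw']] := S2_worst R (F (upd P i Q)).
exists w' => // z zR; apply: (wpref_trans (y := w)).
  by case: (eqVneq z w) => [->|zw]; [left | right; apply: Rw].
by have := spp (upd P i R) i Q w w'; rewrite upd_upd upd_at; apply.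
Qed.

Lemma SPO_top_upd (spo : SPO F) P i Q a :
  a \in val (F P) -> (forall z, z != a -> Q a z) -> a \in val (F (upd P i Q)).
Proof.
move=> aP atop; rewrite -(upd_id P i) in aP.
by have [w wQ /(wpref_top atop) <-] := SPO_upd spo Q aP.
Qed.

Lemma unanimity (spo : SPO F) (wv : weakly_viable F) P a :
  (forall i z, z != a -> P i a z) -> a \in val (F P).
Proof.
move=> atop; have [P0 aP0] := wv a.
apply: (profile_walk (Inv := fun X => a \in val (F X)) aP0) => X i _ aX.
exact: (@SPO_top_upd spo X i (P i) a aX (atop i)).
Qed.

End Strategyproofness.

Section NonadjacentPairs.
Variables (V A : finType) (F : profile V A -> S2 A).
Hypotheses (spo : SPO F) (spp : SPP F) (wv : weakly_viable F).
Implicit Types (P : profile V A) (i : V) (a x y z : A).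

Lemma nonadjacent_pair_upd a x y P i :
  ~ range_edge F a x -> ~ range_edge F a y -> val (F P) = [set x; y] ->
  val (F (upd P i (raise a (raise x (raise y (rank_ord A)))))) = [set x; y].
Proof.
move=> nax nay FP; set Q := raise a _; set W := F (upd P i Q).
have [w' w'P Wle] := SPP_upd spp P i Q (P i); rewrite upd_id FP in w'P.
have W_axy z : z \in val W -> [\/ z = a, z = x | z = y].
  move=> /Wle; case/set2P: w'P => -> /wpref_raise[->|]; try by constructor.
    by move/wpref_raise_top ->; constructor 2.
  by case/wpref_raise => [->|/wpref_raise_top ->]; [constructor 2 | constructor 3].
have aW : a \notin val W.
  apply/negP => aW; have [o oW oa] := S2_other W a.
  have ao : range_edge F a o by apply: range_edge_mem aW oW _; rewrite eq_sym.
  by case: (W_axy o oW) => e; [rewrite e eqxx in oa | apply: nax | apply: nay];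
    rewrite // -e.
apply: S2_sub2 => z zW; case: (W_axy z zW) => e; rewrite e ?set21 ?set22 //.
by rewrite -e zW in aW.
Qed.

Lemma range_edge_meets_nbhd a x y : range_edge F x y -> range_edge F a x \/ range_edge F a y.
Proof.
case=> P FP; case: (pselect (range_edge F a x)) => [|nax]; [by left | right].
apply: contrapT => nay.
have ax : a != x.
  by apply: contra_notN nay => /eqP ->; exists P.
have ay : a != y.
  by apply: contra_notN nax => /eqP ->; exists P; rewrite setUC.
pose Q := raise a (raise x (raise y (rank_ord A))).
have FQ : val (F (fun=> Q)) = [set x; y].
  by apply: (profile_walk (Inv := fun X => val (F X) = [set x; y]) FP) => X i _;
    apply: nonadjacent_pair_upd.
have : a \in val (F (fun=> Q)) by apply: unanimity => // i z; apply: raise_top.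
by rewrite FQ !inE (negbTE ax) (negbTE ay).
Qed.

Lemma nbhd_bipartition a : ~ on_3cycle F a -> bipartition F (nbhd F a).
Proof.
move=> no3 x y xy; rewrite !inE.
case: (asboolP (range_edge F a x)) => ax; case: (asboolP (range_edge F a y)) => ay //=.
  case: no3; exists x, y; split=> //.
  by rewrite (range_edge_neq ax) (range_edge_neq xy) (range_edge_neq ay).
by case: (range_edge_meets_nbhd a xy).
Qed.

End NonadjacentPairs.

Section Bipartition.
Variables (V A : finType) (F : profile V A -> S2 A) (B : {set A}).
Hypotheses (spo : SPO F) (spp : SPP F) (bip : bipartition F B).
Implicit Types (P Q : profile V A) (i : V) (R : linord A) (m n x y z : A).

Lemma bipartitionC : bipartition F (~: B).
Proof. by move=> x y /bip xy; rewrite !inE xy negbK. Qed.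

Lemma bipartition_pair P x y :
  x \in val (F P) -> y \in val (F P) -> x != y -> (x \in B) = (y \notin B).
Proof. by move=> xP yP xy; apply/bip/(range_edge_mem xP yP xy). Qed.

Lemma bipartition_mem P : exists2 x, x \in val (F P) & x \in B.
Proof.
have [p [q [pq FP]]] := S2P (F P).
have := bip (ex_intro _ P FP); rewrite FP.
case pB: (p \in B) => /esym qB; first by exists p; rewrite ?set21.
by exists q; rewrite ?set22 ?(negbFE qB).
Qed.

Lemma bipartition_uniq P x y :
  x \in val (F P) -> x \in B -> y \in val (F P) -> y \in B -> x = y.
Proof.
move=> xP xB yP yB; apply/eqP; apply: contraT => xy.
by move: (bipartition_pair xP yP xy); rewrite xB yB.
Qed.

Lemma block_raise_outcome P i R R' m m' n :
  m \in B -> m' \in B -> m \in val (F (upd P i R)) -> val (F (upd P i R')) = [set m'; n] ->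
  val (F (upd P i (raise m (raise n (block B (rank_ord A)))))) = [set m; n].
Proof.
move=> mB m'B mR FR'; set T := raise m _.
have mT : m \in val (F (upd P i T)).
  by have [w wT /wpref_raise_top <-] := SPO_upd spo T mR.
have [o oT om] := S2_other (F (upd P i T)) m.
have oB : o \notin B by rewrite -(bipartition_pair mT oT) // eq_sym.
suff <- : o = n by apply: S2_eq2; rewrite // eq_sym.
have [w' + /(_ o oT)] := SPP_upd spp P i T R'; rewrite FR' => /set2P[]-> /wpref_raise[oe|].
- by rewrite oe eqxx in om.
- case/wpref_raise => [//|[oe|]]; first by rewrite oe m'B in oB.
  by rewrite block_outF.
- by rewrite oe eqxx in om.
- exact: wpref_raise_top.
Qed.

Lemma bipartition_upd_ltF P i R R' m m' :
  {in B &, R =2 R'} -> m \in B -> m' \in B ->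
  m \in val (F (upd P i R)) -> m' \in val (F (upd P i R')) -> R m m' = false.
Proof.
move=> RR' mB m'B mR m'R'; apply/negP => Rmm'.
have R'mm' : R' m m' by rewrite -RR'.
have [n nR' nm'] := S2_other (F (upd P i R')) m'.
have FR' : val (F (upd P i R')) = [set m'; n] by apply: S2_eq2; rewrite // eq_sym.
have nB : n \notin B by rewrite -(bipartition_pair m'R' nR') // eq_sym.
have FT := block_raise_outcome mB m'B mR FR'; set T := raise m _ in FT.
have mn : m != n by apply: contraNneq nB => <-.
(* Voter i with true order R' prefers the outcome [set m; n] of T to [set m'; n]:
   by best element if R' m n (SPO), by worst element otherwise (SPP). *)
case/orP: (lrel_tot R' mn) => [R'mn | R'nm].
  have mT : m \in val (F (upd P i T)) by rewrite FT set21.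
  have [w] := SPO_upd spo R' mT; rewrite FR' => /set2P[]-> /wpref_ltF.
    by rewrite R'mm'.
  by rewrite R'mn.
have [w' + /(_ m' m'R')] := SPP_upd spp P i R' T; rewrite FT => /set2P[]-> /wpref_ltF.
  by rewrite R'mm'.
by rewrite (lrel_lt_trans R'nm R'mm').
Qed.

Lemma bipartition_upd_eq P i R R' m m' :
  {in B &, R =2 R'} -> m \in B -> m' \in B ->
  m \in val (F (upd P i R)) -> m' \in val (F (upd P i R')) -> m = m'.
Proof.
move=> RR' mB m'B mR m'R'; apply/eqP; apply: contraT => mm'.
case/orP: (lrel_tot R mm'); first by rewrite (bipartition_upd_ltF RR' mB m'B mR m'R').
have R'R : {in B &, R' =2 R} by move=> u v uB vB; rewrite RR'.
by rewrite RR' // (bipartition_upd_ltF R'R m'B mB m'R' mR).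
Qed.

Lemma bipartition_indep Q Q' z : (forall j, {in B &, Q j =2 Q' j}) ->
  z \in val (F Q') -> z \in B -> z \in val (F Q).
Proof.
move=> QQ'; move: z.
apply: (profile_walk (Inv := fun X => forall z, z \in val (F X) -> z \in B -> z \in val (F Q))
  (P := Q)) => [// | X i QX XQ z zX zB].
have [m mX mB] := bipartition_mem X.
have mXi : m \in val (F (upd X i (X i))) by rewrite upd_id.
rewrite (bipartition_upd_eq _ zB mB zX mXi); first exact: XQ.
by case: (QX i) => -> u v uB vB; rewrite ?QQ'.
Qed.

Definition induced_rule (b0 : subalt B) (R : profile V (subalt B)) : subalt B :=
  odflt b0 [pick x | `[< exists P, restr B P = R /\ val x \in val (F P) >]].

Lemma induced_ruleE b0 P m :
  m \in val (F P) -> m \in B -> val (induced_rule b0 (restr B P)) = m.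
Proof.
move=> mP mB; rewrite /induced_rule; case: pickP => [x /asboolP [P' [P'P xP']] | none] /=.
  have PP' j : {in B &, P j =2 P' j}.
    move=> u v uB vB.
    have := congr1 (fun Q : profile V (subalt B) => Q j (Sub u uB) (Sub v vB)) P'P.
    by rewrite /restr /= /rrel /= => ->.
  exact: bipartition_uniq (bipartition_indep PP' xP' (valP x)) (valP x) mP mB.
by move: (none (Sub m mB)); rewrite asboolT //; exists P.
Qed.

End Bipartition.

Lemma bipartition_reducible (V A : finType) (F : profile V A -> S2 A) (B : {set A}) :
  SPO F -> SPP F -> bipartition F B -> subalt B -> subalt (~: B) -> reducible F.
Proof.
move=> spo spp bip b0 c0; have bipC := bipartitionC bip.
exists B, (~: B), (induced_rule F b0), (induced_rule F c0); split=> [||P].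
- exact: setICr.
- exact: setUCr.
have [p [q [pq FP]]] := S2P (F P).
have pP : p \in val (F P) by rewrite FP set21.
have qP : q \in val (F P) by rewrite FP set22.
have := bip p q (ex_intro _ P FP); case pB: (p \in B) => /esym qB.
  by rewrite (induced_ruleE spo spp bip b0 pP pB) (induced_ruleE spo spp bipC c0 qP) ?inE.
rewrite (induced_ruleE spo spp bip b0 qP (negbFE qB)).
by rewrite (induced_ruleE spo spp bipC c0 pP) ?inE ?pB // FP setUC.
Qed.

Theorem fact39 (V A : finType) (F : profile V A -> S2 A) :
  0 < #|V| -> irreducible F -> weakly_viable F -> SPP F -> SPO F ->
  forall a : A, on_3cycle F a.
Proof.
move=> _ irr wv spp spo a; apply: contrapT => no3.
have [y ay] : exists y, range_edge F a y.
  have [P aP] := wv a; have [y yP ya] := S2_other (F P) a.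
  by exists y; apply: range_edge_mem aP yP _; rewrite eq_sym.
have yN : y \in nbhd F a by rewrite inE asboolT.
have aN : a \in ~: nbhd F a by rewrite !inE; apply/asboolPn => /range_edge_neq; rewrite eqxx.
have bipN := nbhd_bipartition spo spp wv no3.
exact/irr/(bipartition_reducible spo spp bipN (Sub y yN) (Sub a aN)).
Qed.
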